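(* Let $M$ be a monoid defined by a positive homogeneous presentation on a generator set $L$. Then: (i) every fundamental element $\Delta$ of $M$ is quasi-central, and the permutation of $L/\!\sim$ associated with $\Delta$ as a fundamental element coincides with the one associated with it as a quasi-central element; (ii) if $\Delta$ is fundamental and $\Delta'$ is quasi-central, then $\Delta\Delta'$ and $\Delta'\Delta$ are fundamental, with associated permutations $\sigma_{\Delta\Delta'}=\sigma_{\Delta'}\circ\sigma_\Delta$ and $\sigma_{\Delta'\Delta}=\sigma_\Delta\circ\sigma_{\Delta'}$, and one can take $(\Delta\Delta')_x=\Delta_x\Delta'$ and $(\Delta'\Delta)_x=\Delta'\Delta_{\sigma_{\Delta'}(x)}$ for $x\in L/\!\sim$. In particular $\mathcal{F}(M)\mathcal{QZ}(M)=\mathcal{QZ}(M)\mathcal{F}(M)=\mathcal{F}(M)$.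
   Context: A positive homogeneous presentation consists of generators $L$ and relations $R=S$ with $R,S$ positive words in $L$ of equal length; $M$ is the quotient of the free monoid $L^*$ by the congruence generated by these relations. $L/\!\sim$ is the quotient of $L$ by the equivalence generated by relations equating two letters; its elements are regarded as elements of $M$. $\Delta\in M$ is quasi-central if there is a permutation $\sigma_\Delta$ of $L/\!\sim$ with $x\Delta=\Delta\sigma_\Delta(x)$ for all $x\in L/\!\sim$; $\mathcal{QZ}(M)$ is the set of quasi-central elements. $\Delta\in M$ is fundamental if there is a permutation $\sigma_\Delta$ of $L/\!\sim$ such that for each $x\in L/\!\sim$ there is $\Delta_x\in M$ with $\Delta=x\Delta_x=\Delta_x\sigma_\Delta(x)$; $\mathcal{F}(M)$ is the set of fundamental elements. *)

(* A positive homogeneous presentation <L | R = S> is given by a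
   type of generators L and a relation-set rel : list L -> list L -> Prop
   (rel r s means "r = s" is a defining relation).  The monoid M = L^*/cong
   is represented by words modulo the congruence [cong]. *)
From Stdlib Require Import List.
Import ListNotations.
Set Implicit Arguments.

Section Pres.
Variables (L : Type) (rel : list L -> list L -> Prop).

Inductive cong : list L -> list L -> Prop :=
| cong_step : forall u v r s, rel r s -> cong (u ++ r ++ v) (u ++ s ++ v)
| cong_refl : forall w, cong w w
| cong_sym : forall w w', cong w w' -> cong w' w
| cong_trans : forall w1 w2 w3, cong w1 w2 -> cong w2 w3 -> cong w1 w3.

Inductive lsim : L -> L -> Prop :=
| lsim_base : forall a b, rel [a] [b] -> lsim a b
| lsim_refl : forall a, lsim a a
| lsim_sym : forall a b, lsim a b -> lsim b a
| lsim_trans : forall a b c, lsim a b -> lsim b c -> lsim a c.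

(* sigma : L -> L induces a permutation of L/~ *)
Definition perm_cls (sigma : L -> L) : Prop :=
  (forall x y, lsim x y -> lsim (sigma x) (sigma y)) /\
  (forall x y, lsim (sigma x) (sigma y) -> lsim x y) /\
  (forall y, exists x, lsim (sigma x) y).

Definition quasicentral_with (d : list L) (sigma : L -> L) : Prop :=
  perm_cls sigma /\ forall x, cong (x :: d) (d ++ [sigma x]).

Definition quasicentral (d : list L) : Prop :=
  exists sigma, quasicentral_with d sigma.

Definition fund_witness (d : list L) (sigma : L -> L) (x : L) (dx : list L) : Prop :=
  cong d (x :: dx) /\ cong d (dx ++ [sigma x]).

Definition fundamental_with (d : list L) (sigma : L -> L) : Prop :=
  perm_cls sigma /\ forall x, exists dx, fund_witness d sigma x dx.

Definition fundamental (d : list L) : Prop :=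
  exists sigma, fundamental_with d sigma.

Definition homogeneous : Prop :=
  forall r s, rel r s -> length r = length s.

End Pres.

(* A fundamental element is quasi-central because
   x Delta = x Delta_x sigma(x) = Delta sigma(x).  For (ii), the witness
   Delta_x Delta' satisfies Delta Delta' = x Delta_x Delta' and
   Delta_x Delta' sigma'(sigma(x)) = Delta_x sigma(x) Delta' = Delta Delta',
   and symmetrically for Delta' Delta.  The equalities of sets follow since
   the empty word is quasi-central and fundamentality is invariant in M. *)
From Stdlib Require Import List.
Import ListNotations.
Set Implicit Arguments.

Section Presentation.
Variables (L : Type) (rel : list L -> list L -> Prop).

Lemma cong_app_l c a b : cong rel a b -> cong rel (c ++ a) (c ++ b).
Proof.
  induction 1.
  - rewrite !app_assoc, <- !(app_assoc (c ++ u)). now constructor.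
  - apply cong_refl.
  - now apply cong_sym.
  - eapply cong_trans; eauto.
Qed.

Lemma cong_app_r c a b : cong rel a b -> cong rel (a ++ c) (b ++ c).
Proof.
  induction 1.
  - rewrite <- !app_assoc. now constructor.
  - apply cong_refl.
  - now apply cong_sym.
  - eapply cong_trans; eauto.
Qed.

Lemma perm_cls_id : perm_cls rel (fun x => x).
Proof.
  split; [|split]; auto. intros y. exists y. apply lsim_refl.
Qed.

Lemma perm_cls_comp f g :
  perm_cls rel f -> perm_cls rel g -> perm_cls rel (fun x => g (f x)).
Proof.
  intros [f_mor [f_inj f_surj]] [g_mor [g_inj g_surj]].
  split; [|split]; auto.
  intros y. destruct (g_surj y) as [z Hz]. destruct (f_surj z) as [w Hw].
  exists w. eapply lsim_trans; [apply g_mor; exact Hw | exact Hz].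
Qed.

Lemma quasicentral_with_nil : quasicentral_with rel [] (fun x => x).
Proof.
  split; [apply perm_cls_id | intros x; apply cong_refl].
Qed.

Lemma fund_witness_commute d sigma x dx :
  fund_witness rel d sigma x dx -> cong rel (x :: d) (d ++ [sigma x]).
Proof.
  intros [d_left d_right].
  apply cong_trans with (x :: dx ++ [sigma x]).
  - exact (cong_app_l [x] d_right).
  - apply cong_sym. exact (cong_app_r [sigma x] d_left).
Qed.

Lemma fundamental_with_quasicentral_with d sigma :
  fundamental_with rel d sigma -> quasicentral_with rel d sigma.
Proof.
  intros [Hperm Hwit]. split; [exact Hperm|].
  intros x. destruct (Hwit x) as [dx Hdx].
  exact (fund_witness_commute Hdx).
Qed.

Section Products.
Variables (d d' : list L) (sigma sigma' : L -> L).
Hypothesis qc : quasicentral_with rel d' sigma'.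

Lemma fund_witness_app_r x dx :
  fund_witness rel d sigma x dx ->
  fund_witness rel (d ++ d') (fun y => sigma' (sigma y)) x (dx ++ d').
Proof.
  intros [d_left d_right]. split.
  - exact (cong_app_r d' d_left).
  - apply cong_trans with ((dx ++ [sigma x]) ++ d').
    + exact (cong_app_r d' d_right).
    + rewrite <- !app_assoc. apply cong_app_l. apply (proj2 qc).
Qed.

Lemma fund_witness_app_l x dy :
  fund_witness rel d sigma (sigma' x) dy ->
  fund_witness rel (d' ++ d) (fun y => sigma (sigma' y)) x (d' ++ dy).
Proof.
  intros [d_left d_right]. split.
  - apply cong_trans with (d' ++ [sigma' x] ++ dy).
    + exact (cong_app_l d' d_left).
    + rewrite app_assoc. apply cong_sym. exact (cong_app_r dy (proj2 qc x)).
  - rewrite <- app_assoc. exact (cong_app_l d' d_right).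
Qed.

Hypothesis fd : fundamental_with rel d sigma.

Lemma fundamental_with_app_r :
  fundamental_with rel (d ++ d') (fun x => sigma' (sigma x)).
Proof.
  split; [exact (perm_cls_comp (proj1 fd) (proj1 qc))|].
  intros x. destruct (proj2 fd x) as [dx Hdx].
  exists (dx ++ d'). exact (fund_witness_app_r Hdx).
Qed.

Lemma fundamental_with_app_l :
  fundamental_with rel (d' ++ d) (fun x => sigma (sigma' x)).
Proof.
  split; [exact (perm_cls_comp (proj1 qc) (proj1 fd))|].
  intros x. destruct (proj2 fd (sigma' x)) as [dy Hdy].
  exists (d' ++ dy). exact (fund_witness_app_l Hdy).
Qed.

End Products.

Lemma fundamental_cong w v :
  cong rel w v -> fundamental rel v -> fundamental rel w.
Proof.
  intros Hwv [sigma [Hperm Hwit]]. exists sigma. split; [exact Hperm|].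
  intros x. destruct (Hwit x) as [dx [d_left d_right]].
  exists dx. split; eapply cong_trans; eauto.
Qed.

Lemma fundamental_iff_fundamental_app_quasicentral w :
  fundamental rel w <->
  exists d d', fundamental rel d /\ quasicentral rel d' /\ cong rel w (d ++ d').
Proof.
  split.
  - intros Hw. exists w, []. rewrite app_nil_r.
    split; [exact Hw | split; [eexists; apply quasicentral_with_nil | apply cong_refl]].
  - intros (d & d' & [sigma fd] & [sigma' qc] & Hw).
    apply fundamental_cong with (d ++ d'); [exact Hw|].
    eexists. exact (fundamental_with_app_r qc fd).
Qed.

Lemma fundamental_iff_quasicentral_app_fundamental w :
  fundamental rel w <->
  exists d' d, quasicentral rel d' /\ fundamental rel d /\ cong rel w (d' ++ d).
Proof.
  split.
  - intros Hw. exists [], w.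
    split; [eexists; apply quasicentral_with_nil | split; [exact Hw | apply cong_refl]].
  - intros (d' & d & [sigma' qc] & [sigma fd] & Hw).
    apply fundamental_cong with (d' ++ d); [exact Hw|].
    eexists. exact (fundamental_with_app_l qc fd).
Qed.

End Presentation.

Theorem fact3 (L : Type) (rel : list L -> list L -> Prop)
  (hom : homogeneous rel) :
  (forall (d : list L) (sigma : L -> L),
      fundamental_with rel d sigma -> quasicentral_with rel d sigma) /\
  (forall (d d' : list L) (sigma sigma' : L -> L),
      fundamental_with rel d sigma -> quasicentral_with rel d' sigma' ->
      fundamental_with rel (d ++ d') (fun x => sigma' (sigma x)) /\
      fundamental_with rel (d' ++ d) (fun x => sigma (sigma' x)) /\
      (forall x dx, fund_witness rel d sigma x dx ->
         fund_witness rel (d ++ d') (fun y => sigma' (sigma y)) x (dx ++ d')) /\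
      (forall x dy, fund_witness rel d sigma (sigma' x) dy ->
         fund_witness rel (d' ++ d) (fun y => sigma (sigma' y)) x (d' ++ dy))) /\
  (* F(M) QZ(M) = QZ(M) F(M) = F(M), as subsets of M *)
  (forall w : list L,
      fundamental rel w <->
      exists d d', fundamental rel d /\ quasicentral rel d' /\ cong rel w (d ++ d')) /\
  (forall w : list L,
      fundamental rel w <->
      exists d' d, quasicentral rel d' /\ fundamental rel d /\ cong rel w (d' ++ d)).
Proof.
  split; [exact (@fundamental_with_quasicentral_with L rel)|].
  split; [|split].
  - intros d d' sigma sigma' fd qc.
    split; [exact (fundamental_with_app_r qc fd)|].
    split; [exact (fundamental_with_app_l qc fd)|].
    split; intros x w; [apply fund_witness_app_r | apply fund_witness_app_l]; exact qc.
  - exact (@fundamental_iff_fundamental_app_quasicentral L rel).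
  - exact (@fundamental_iff_quasicentral_app_fundamental L rel).
Qed.
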